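(* Let $k\ge 2$ and let $G$ be a finite simple $r$-regular graph admitting a closed neighborhood balanced $k$-coloring $c$ with color classes $V_1,\dots,V_k$. Then for every $i$, $|V_i|=\frac{|V(G)|}{k}$ and $|E(V_i,V_i)|=\frac{(r+1-k)|V(G)|}{2k^2}$, and for all distinct $i,j$, $|E(V_i,V_j)|=\frac{(r+1)|V(G)|}{k^2}$.
   Context: For a vertex $v$, $N[v]=\{v\}\cup\{u : uv\in E(G)\}$. A closed neighborhood balanced $k$-coloring of $G$ is a map $c: V(G)\to\{1,\dots,k\}$ such that for every vertex $v$ the numbers $|\{u\in N[v] : c(u)=i\}|$, $i=1,\dots,k$, are all equal; its color classes are $V_i=c^{-1}(i)$. For $X,Y\subseteq V(G)$, $E(X,Y)$ is the set of edges joining a vertex of $X$ to a vertex of $Y$; $E(X,X)$ is the set of edges with both endpoints in $X$. *)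

From mathcomp Require Import all_boot all_order all_algebra.
Set Implicit Arguments. Unset Strict Implicit. Unset Printing Implicit Defensive.

Definition simple_graph (T : finType) (e : rel T) : Prop :=
  symmetric e /\ irreflexive e.

Definition nbhd (T : finType) (e : rel T) (v : T) : {set T} :=
  [set u | e v u].
Definition cnbhd (T : finType) (e : rel T) (v : T) : {set T} :=
  v |: nbhd e v.

Definition regular (T : finType) (e : rel T) (r : nat) : Prop :=
  forall v : T, #|nbhd e v| = r.

(* closed neighbourhood balanced k-colouring c : T -> 'I_k
   (colours 1..k are represented by 'I_k) *)
Definition cnb_coloring (T : finType) (e : rel T) (k : nat) (c : T -> 'I_k) : Prop :=
  forall (v : T) (i j : 'I_k),
    #|[set u in cnbhd e v | c u == i]| = #|[set u in cnbhd e v | c u == j]|.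

Definition color_class (T : finType) (k : nat) (c : T -> 'I_k) (i : 'I_k) : {set T} :=
  [set v | c v == i].

Definition edges_between (T : finType) (e : rel T) (X Y : {set T}) : {set {set T}} :=
  [set s : {set T} | [exists x in X, exists y in Y, e x y && (s == [set x; y])]].

From mathcomp Require Import all_boot all_order all_algebra lra.
Import GRing.Theory Num.Theory.

Set Implicit Arguments.
Unset Strict Implicit.
Unset Printing Implicit Defensive.

(* Every closed neighbourhood has r + 1 vertices, (r + 1)/k of each colour.
   Double counting the pairs (v, u) with u in N[v] and u in V_i gives
   |V_i| (r + 1) = |V(G)| (r + 1)/k.  A vertex of V_i then has (r + 1)/k
   neighbours in every other class and (r + 1)/k - 1 in its own; summing over
   V_i counts each edge of E(V_i, V_j) once and each edge of E(V_i, V_i) twice. *)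

Lemma set2_eq (T : finType) (a b x y : T) :
  [set a; b] = [set x; y] -> (a, b) = (x, y) \/ (a, b) = (y, x).
Proof.
move=> eq_ab_xy.
have in_xy u : u \in [set a; b] -> u = x \/ u = y by rewrite eq_ab_xy => /set2P.
have in_ab u : u \in [set x; y] -> u = a \/ u = b by rewrite -eq_ab_xy => /set2P.
case: (in_xy a (set21 a b)) => ea; case: (in_xy b (set22 a b)) => eb; subst a b.
- by case: (in_ab y (set22 x y)) => ->; left.
- by left.
- by right.
- by case: (in_ab x (set21 x y)) => ->; right.
Qed.

Lemma card_setI_sum (T : finType) (A X : {set T}) :
  #|A :&: X| = \sum_(u in X) (u \in A).
Proof.
rewrite -sum1_card big_mkcond [RHS]big_mkcond /=; apply: eq_bigr => u _.
by rewrite inE; case: (u \in A); case: (u \in X).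
Qed.

Section Graph.
Variables (T : finType) (e : rel T).

Definition arcs (X Y : {set T}) : {set T * T} :=
  [set p | [&& p.1 \in X, p.2 \in Y & e p.1 p.2]].

Lemma edges_betweenE (X Y : {set T}) :
  edges_between e X Y = [set [set p.1; p.2] | p in arcs X Y].
Proof.
apply/setP => s; rewrite inE; apply/existsP/imsetP.
  case=> x /andP[xX /existsP[y /andP[yY /andP[exy /eqP->]]]].
  by exists (x, y); rewrite // inE /= xX yY exy.
case=> -[x y]; rewrite inE /= => /and3P[xX yY exy] ->.
by exists x; rewrite xX; apply/existsP; exists y; rewrite yY exy eqxx.
Qed.

Lemma card_arcs (X Y : {set T}) : #|arcs X Y| = \sum_(x in X) #|nbhd e x :&: Y|.
Proof.
rewrite -sum1_card (partition_big fst (fun x => x \in X)) => [|[x y]]; last first.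
  by rewrite inE => /and3P[].
apply: eq_bigr => x xX; rewrite sum1dep_card.
have -> : [set p | (p \in arcs X Y) && (p.1 == x)] = pair x @: (nbhd e x :&: Y).
  apply/setP => -[x' y]; rewrite !inE /=; apply/idP/imsetP.
    by case/andP=> /and3P[_ yY exy] /eqP <-; exists y; rewrite // !inE exy.
  by case=> y' /setIP[]; rewrite inE => exy yY [-> ->]; rewrite xX yY exy eqxx.
by apply: card_imset => y y' [].
Qed.

Lemma card_edges_between_disjoint (X Y : {set T}) : [disjoint X & Y] ->
  #|edges_between e X Y| = #|arcs X Y|.
Proof.
move=> dXY; rewrite edges_betweenE; apply: card_in_imset => -[x y] [x' y'].
rewrite !inE /= => /and3P[xX _ _] /and3P[_ y'Y _] /set2_eq[// | [ex _]].
by move: (disjointFr dXY xX); rewrite ex y'Y.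
Qed.

Hypotheses (e_sym : symmetric e) (e_irr : irreflexive e).

Lemma card_cnbhd_setI (X : {set T}) v :
  #|cnbhd e v :&: X| = (v \in X) + #|nbhd e v :&: X|.
Proof.
have v_notin_nbhd : v \notin nbhd e v by rewrite inE e_irr.
rewrite /cnbhd setIUl; case: (boolP (v \in X)) => vX.
  by rewrite (setIidPl _) ?sub1set // cardsU1 inE (negPf v_notin_nbhd).
rewrite (_ : [set v] :&: X = set0) ?set0U //.
by apply/setP => u; rewrite !inE; apply/andP => -[/eqP->]; apply/negP.
Qed.

Lemma sum_card_cnbhd_setI (X : {set T}) :
  \sum_v #|cnbhd e v :&: X| = \sum_(u in X) #|cnbhd e u|.
Proof.
under eq_bigr do rewrite card_setI_sum.
rewrite exchange_big; apply: eq_bigr => u _.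
rewrite -sum1_card [RHS]big_mkcond; apply: eq_bigr => v _.
by rewrite !inE eq_sym e_sym; case: (_ || _).
Qed.

Lemma card_arcs_within (X : {set T}) : #|arcs X X| = 2 * #|edges_between e X X|.
Proof.
rewrite edges_betweenE -sum1_card (partition_big_imset (fun p => [set p.1; p.2])).
rewrite /= mulnC -sum_nat_const; apply: eq_bigr => _ /imsetP[[x y] xy_arc ->] /=.
move: xy_arc; rewrite inE /= => /and3P[xX yX exy].
rewrite sum1dep_card (_ : [set _ | _] = [set (x, y); (y, x)]).
  have x_neq_y : x != y by apply: contraTneq exy => ->; rewrite e_irr.
  by rewrite cards2 xpair_eqE negb_and x_neq_y.
apply/setP => -[x' y']; rewrite in_set; apply/andP/set2P.
  by case=> _ /eqP/set2_eq.
by case=> -[-> ->]; rewrite inE /= xX yX ?exy // e_sym exy setUC.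
Qed.
End Graph.

Section Coloring.
Variables (T : finType) (k : nat) (c : T -> 'I_k).

Lemma card_partition_color_class (A : {set T}) :
  #|A| = \sum_(j < k) #|A :&: color_class c j|.
Proof.
rewrite -sum1_card (partition_big c predT) //; apply: eq_bigr => j _.
by rewrite -sum1_card; apply: eq_bigl => u; rewrite !inE.
Qed.

Lemma disjoint_color_class i j : i != j ->
  [disjoint color_class c i & color_class c j].
Proof.
move=> ij; rewrite -setI_eq0; apply/eqP/setP => u; rewrite !inE.
by apply/andP => -[/eqP-> /eqP ij']; rewrite ij' eqxx in ij.
Qed.

Variable e : rel T.
Hypothesis c_balanced : cnb_coloring e c.

Lemma cnb_coloring_card v j : k * #|cnbhd e v :&: color_class c j| = #|cnbhd e v|.
Proof.
have class_count i : #|cnbhd e v :&: color_class c i| = #|[set u in cnbhd e v | c u == i]|.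
  by apply: eq_card => u; rewrite !inE.
rewrite [RHS]card_partition_color_class.
under eq_bigr => i _ do rewrite class_count (c_balanced v i j) -class_count.
by rewrite sum_nat_const card_ord.
Qed.

Variable r : nat.
Hypotheses (e_simple : simple_graph e) (e_regular : regular e r).

Lemma card_cnbhd_regular v : #|cnbhd e v| = r.+1.
Proof.
case: e_simple => _ e_irr.
by rewrite /cnbhd cardsU1 inE e_irr e_regular.
Qed.

Lemma balanced_card_nbhd v j :
  k * ((c v == j) + #|nbhd e v :&: color_class c j|) = r.+1.
Proof.
case: e_simple => _ e_irr.
by rewrite -(card_cnbhd_regular v) -(cnb_coloring_card v j) card_cnbhd_setI // inE.
Qed.

Lemma card_color_class i : k * #|color_class c i| = #|T|.
Proof.
case: e_simple => e_sym _.
have double_count : \sum_v #|cnbhd e v :&: color_class c i| = #|color_class c i| * r.+1.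
  rewrite sum_card_cnbhd_setI //.
  under eq_bigr do rewrite card_cnbhd_regular.
  by rewrite sum_nat_const.
apply/eqP; rewrite -(eqn_pmul2r (ltn0Sn r)) -mulnA -double_count big_distrr /=.
under eq_bigr do rewrite cnb_coloring_card card_cnbhd_regular.
by rewrite sum_nat_const.
Qed.

Lemma card_edges_between_classes i j : i != j ->
  k ^ 2 * #|edges_between e (color_class c i) (color_class c j)| = #|T| * r.+1.
Proof.
move=> ij.
have arcs_count : k * #|arcs e (color_class c i) (color_class c j)|
                  = #|color_class c i| * r.+1.
  rewrite card_arcs big_distrr -sum_nat_const /=.
  apply: eq_bigr => x; rewrite inE => /eqP cx.
  by rewrite -(balanced_card_nbhd x j) cx (negPf ij).
rewrite card_edges_between_disjoint ?disjoint_color_class //.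
by rewrite -mulnn -mulnA arcs_count mulnA card_color_class.
Qed.

Lemma card_edges_within_class i :
  k ^ 2 * (2 * #|edges_between e (color_class c i) (color_class c i)|) + k * #|T|
  = #|T| * r.+1.
Proof.
case: e_simple => e_sym e_irr.
have arcs_count : k * #|arcs e (color_class c i) (color_class c i)| + k * #|color_class c i|
                  = #|color_class c i| * r.+1.
  rewrite card_arcs -sum_nat_const -sum1_card !big_distrr -big_split /=.
  apply: eq_bigr => x; rewrite inE => /eqP cx.
  by rewrite -(balanced_card_nbhd x i) cx eqxx mulnDr addnC muln1.
rewrite -card_arcs_within // -(card_color_class i) -mulnn -!mulnA -mulnDr.
by rewrite arcs_count mulnA.
Qed.
End Coloring.

Local Open Scope ring_scope.

Theorem theorem2p10 (T : finType) (e : rel T) (r k : nat) (c : T -> 'I_k) :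
  (2 <= k)%N ->
  simple_graph e ->
  regular e r ->
  cnb_coloring e c ->
  (forall i : 'I_k,
     (#|color_class c i|%:R : rat) = #|T|%:R / k%:R
     /\ (#|edges_between e (color_class c i) (color_class c i)|%:R : rat)
        = ((r%:R + 1 - k%:R) * #|T|%:R) / (2 * k%:R ^+ 2))
  /\ (forall i j : 'I_k, i != j ->
     (#|edges_between e (color_class c i) (color_class c j)|%:R : rat)
       = ((r%:R + 1) * #|T|%:R) / (k%:R ^+ 2)).
Proof.
move=> k_ge2 e_simple e_regular c_balanced.
have k_neq0 : (k%:R : rat) != 0 by rewrite pnatr_eq0 -lt0n (ltn_trans _ k_ge2).
have natr_eq m n : m = n -> (m%:R : rat) = n%:R by move->.
split=> [i | i j ij].
  split.
    by rewrite -(card_color_class c_balanced e_simple e_regular i) natrM mulrC mulKf.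
  move: (natr_eq _ _ (card_edges_within_class c_balanced e_simple e_regular i)).
  rewrite natrD !natrM -natr1 => within.
  have two_k2_neq0 : 2 * k%:R ^+ 2 != 0 :> rat by rewrite mulf_neq0 ?expf_neq0.
  apply: (mulfI two_k2_neq0); rewrite [RHS]mulrC divfK //.
  lra.
move: (natr_eq _ _ (card_edges_between_classes c_balanced e_simple e_regular ij)).
rewrite !natrM -natr1 => between.
by rewrite [_ * #|T|%:R]mulrC -between mulrC mulKf // expf_neq0.
Qed.
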